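(* For every integer $n>24$, the generalized Petersen graph $GP(n,4)$ is not $1$-distance-balanced.
   Context: For a connected graph $G$ and $x,y\in V(G)$, $d_G(x,y)$ denotes the distance. Let $W_{xy}=\{w\in V(G): d_G(w,x)<d_G(w,y)\}$. $G$ is called $\ell$-distance-balanced if $|W_{xy}|=|W_{yx}|$ for every pair $x,y\in V(G)$ with $d_G(x,y)=\ell$. For integers $n\ge 3$ and $1\le k<n/2$, the generalized Petersen graph $GP(n,k)$ has vertex set $\{u_i: i\in\mathbb{Z}_n\}\cup\{v_i: i\in\mathbb{Z}_n\}$ and edge set $\{u_iu_{i+1}: i\in\mathbb{Z}_n\}\cup\{v_iv_{i+k}: i\in\mathbb{Z}_n\}\cup\{u_iv_i: i\in\mathbb{Z}_n\}$. *)

From mathcomp Require Import all_boot.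
Set Implicit Arguments. Unset Strict Implicit. Unset Printing Implicit Defensive.

Section Graph.
Variable T : finType.
Variable e : rel T.

Definition walk_of_len (x y : T) (k : nat) : bool :=
  [exists p : k.-tuple T, path e x p && (last x p == y)].

(* graph distance: least k with a walk of length k from x to y
   (a shortest walk has length < #|T|; value #|T| if unreachable) *)
Definition gdist (x y : T) : nat :=
  find (walk_of_len x y) (iota 0 #|T|).

Definition Wset (x y : T) : {set T} := [set w | gdist w x < gdist w y].

Definition dist_balanced (l : nat) : Prop :=
  forall x y : T, gdist x y = l -> #|Wset x y| = #|Wset y x|.

End Graph.

(* Generalized Petersen graph GP(n,k): vertices (false,i) = u_i, (true,i) = v_i *)
Definition GPV (n : nat) : finType := (bool * 'I_n)%type.

Definition gp_adj (n k : nat) : rel (GPV n) := fun x y =>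
  match x, y with
  | (false, i), (false, j) => (val j == (val i + 1) %% n) || (val i == (val j + 1) %% n)
  | (true, i), (true, j) => (val j == (val i + k) %% n) || (val i == (val j + k) %% n)
  | _, (_, j) => val x.2 == val j
  end.
Arguments gp_adj n k : clear implicits.

(* GP(n,4) is the quotient of an infinite ladder on Z, in which the distances from (u,0) and
   from (v,0) have closed forms; for n >= 24 the distance in GP(n,4) is the smaller of the
   ladder distances to the two nearest lifts of a vertex.  These formulas are certified by the
   fact that a function which drops by at most one along edges, vanishes only at the target and
   always has a neighbour one smaller is the distance to the target.  Comparing them index by
   index shows that at least two more vertices are strictly closer to v_0 than to u_0, although
   u_0 and v_0 are adjacent. *)

From mathcomp Require Import all_boot zify.
Set Implicit Arguments. Unset Strict Implicit. Unset Printing Implicit Defensive.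

Section DistancePotential.
Variables (T : finType) (e : rel T) (s : T) (D : T -> nat).
Hypotheses (D_lipschitz : forall a b, e a b -> D a <= (D b).+1)
  (D_s : D s = 0) (D_eq0 : forall a, D a = 0 -> a = s)
  (D_descent : forall a, 0 < D a -> exists2 b, e a b & D b = (D a).-1)
  (D_lt_card : forall a, D a < #|T|).

Lemma potential_path_le (p : seq T) a : path e a p -> D a <= size p + D (last a p).
Proof.
elim: p a => [|b p IHp] a /=; first by rewrite add0n.
by case/andP=> /D_lipschitz ab /IHp; lia.
Qed.

Lemma potential_descent_path m a : D a = m ->
  exists p, [/\ size p = m, path e a p & last a p = s].
Proof.
elim: m a => [|m IHm] a Da; first by exists [::]; rewrite (D_eq0 Da).
have [b ab Db] := D_descent (ltac:(lia) : 0 < D a).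
have [p [size_p path_p last_p]] := IHm b (ltac:(lia)).
by exists (b :: p); rewrite /= ab size_p.
Qed.

Lemma walk_of_len_potential a : walk_of_len e a s (D a).
Proof.
have [p [size_p path_p last_p]] := potential_descent_path (erefl (D a)).
by apply/existsP; exists (Tuple (introT eqP size_p)); rewrite /= path_p last_p eqxx.
Qed.

Lemma gdist_potential a : gdist e a s = D a.
Proof.
have walk_Da := walk_of_len_potential a.
have has_walk : has (walk_of_len e a s) (iota 0 #|T|).
  by apply/hasP; exists (D a); rewrite // mem_iota add0n (D_lt_card a).
have find_lt := has_walk; rewrite has_find size_iota in find_lt.
rewrite /gdist; set m := find _ _ in find_lt *.
have [lt_mD|lt_Dm|//] := ltngtP m (D a).
- have := nth_find 0 has_walk; rewrite -/m nth_iota // add0n.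
  case/existsP=> p /andP[path_p /eqP last_p].
  by have := potential_path_le path_p; rewrite last_p D_s size_tuple; lia.
- by have := before_find 0 lt_Dm; rewrite nth_iota // add0n walk_Da.
Qed.

End DistancePotential.

Lemma addn_modn_cases n i s : i < n -> s <= n ->
  (i + s < n /\ (i + s) %% n = i + s) \/ (n <= i + s /\ (i + s) %% n = i + s - n).
Proof.
move=> lt_in le_sn; case: (ltnP (i + s) n) => [lt_isn|le_nis].
  by left; rewrite modn_small.
by right; rewrite -{1}(subnK le_nis) modnDr modn_small //; lia.
Qed.

Definition step (k : nat) (b : bool) : nat := if b then k else 1.

Lemma gp_adj_same n k b (i j : 'I_n) :
  gp_adj n k (b, i) (b, j) = (val j == (i + step k b) %% n) || (val i == (j + step k b) %% n).
Proof. by case: b. Qed.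

Lemma gp_adj_spoke n k b (i j : 'I_n) : gp_adj n k (b, i) (~~ b, j) = (val i == val j).
Proof. by case: b. Qed.

(* [F b x] stands for the distance from (b0, 0) to (b, x), or equivalently to (b, -x), in the
   infinite ladder on Z with edges (false, x) ~ (false, x + 1), (true, x) ~ (true, x + k) and
   (false, x) ~ (true, x), whose quotient by x ~ x + n is GP(n,k).  The hypotheses are the local
   properties of such a distance that are needed; [qdist b i] is the distance to the nearer of
   the two lifts i and i - n of (b, i). *)
Section LadderQuotient.
Variables (n k : nat) (F : bool -> nat -> nat) (b0 : bool) (o : 'I_n).
Hypotheses (k_gt0 : 0 < k) (k_lt_half : 2 * k < n) (o_eq0 : val o = 0).
Hypotheses
  (F_step : forall b x, F b x <= (F b (x + step k b)).+1 /\ F b (x + step k b) <= (F b x).+1)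
  (F_fold : forall b x, x <= step k b -> F b x <= (F b (step k b - x)).+1)
  (F_spoke : forall b x, F b x <= (F (~~ b) x).+1)
  (F_near_far : forall b x y, x <= k -> n <= y + k -> F b x <= F b y)
  (F_eq0 : forall b x, F b x = 0 -> b = b0 /\ x = 0)
  (F_base : F b0 0 = 0)
  (F_le : forall b x, F b x <= x.+2)
  (F_descent : forall b x, 0 < F b x ->
     F (~~ b) x = (F b x).-1 \/ F b (x + step k b) = (F b x).-1 \/
     (step k b <= x /\ F b (x - step k b) = (F b x).-1) \/
     (x < step k b /\ F b (step k b - x) = (F b x).-1)).

Definition qdist (b : bool) (i : nat) : nat := minn (F b i) (F b (n - i)).

Definition qpot (w : GPV n) : nat := qdist w.1 w.2.

Let k_lt_n : k < n. Proof. lia. Qed.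
Let n_gt0 : 0 < n. Proof. exact: leq_ltn_trans k_lt_n. Qed.

Lemma step_le b : step k b <= k.
Proof. by case: b. Qed.

Lemma qdist_le b i x : x = i \/ x + i = n -> qdist b i <= F b x.
Proof. by rewrite /qdist; case=> [->|<-]; rewrite ?addnK (geq_minl, geq_minr). Qed.

Lemma qdist_lt b i x m : x = i \/ x + i = n -> F b x < m -> qdist b i < m.
Proof. by move/qdist_le => le_qF; apply: leq_ltn_trans. Qed.

Lemma qdist_sym b i : i <= n -> qdist b (n - i) = qdist b i.
Proof. by move=> le_in; rewrite /qdist subKn // minnC. Qed.

Lemma qdist_step b i : i < n ->
  qdist b i <= (qdist b ((i + step k b) %% n)).+1 /\
  qdist b ((i + step k b) %% n) <= (qdist b i).+1.
Proof.
move=> lt_in; have le_sk := step_le b.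
have [[lt_isn ->]|[le_nis ->]] := addn_modn_cases lt_in (ltnW (leq_ltn_trans le_sk k_lt_n)).
- have := F_step b i; have := F_step b (n - (i + step k b)).
  by rewrite (_ : n - (i + step k b) + step k b = n - i) /qdist; lia.
- set j := i + step k b - n.
  have := @F_near_far b (n - i) i; have := @F_near_far b j (n - j).
  have := @F_fold b j; have := @F_fold b (step k b - j).
  by rewrite (_ : step k b - j = n - i) 1?(_ : step k b - (n - i) = j) /qdist; lia.
Qed.

Lemma qpot_lipschitz w w' : gp_adj n k w w' -> qpot w <= (qpot w').+1.
Proof.
case: w w' => b i [b' j]; rewrite /qpot.
have [<-|/negPf neq_bb'] := eqVneq b b'.
  rewrite gp_adj_same /= => /orP[/eqP ->|/eqP ->].
  - by case: (qdist_step b (ltn_ord i)).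
  - by case: (qdist_step b (ltn_ord j)).
have -> : b' = ~~ b by case: b b' neq_bb' => [] [].
rewrite gp_adj_spoke /= => /eqP <-.
by have := F_spoke b i; have := F_spoke b (n - i); rewrite /qdist; lia.
Qed.

Lemma qpot_descent w : 0 < qpot w -> exists2 w', gp_adj n k w w' & qpot w' = (qpot w).-1.
Proof.
move=> qw_gt0; suff [w' ww' lt_w'w] : exists2 w', gp_adj n k w w' & qpot w' < qpot w.
  by exists w' => //; have := qpot_lipschitz ww'; lia.
case: w qw_gt0 => b i; rewrite (_ : qpot (b, i) = qdist b i) //.
have lt_in := ltn_ord i; have le_sk := step_le b.
pose fwd := Ordinal (ltn_pmod (i + step k b) n_gt0).
pose bwd := Ordinal (ltn_pmod (i + (n - step k b)) n_gt0).
have adj_spoke : gp_adj n k (b, i) (~~ b, i) by rewrite gp_adj_spoke.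
have adj_fwd : gp_adj n k (b, i) (b, fwd) by rewrite gp_adj_same eqxx.
have adj_bwd : gp_adj n k (b, i) (b, bwd).
  rewrite gp_adj_same; apply/orP; right.
  by rewrite /= modnDml -addnA subnK ?modnDr ?modn_small ?eqxx; lia.
have fwd_val : i + step k b < n /\ fwd = i + step k b :> nat \/
               n <= i + step k b /\ fwd = i + step k b - n :> nat.
  rewrite /fwd /=; exact: addn_modn_cases lt_in (ltnW (leq_ltn_trans le_sk k_lt_n)).
have bwd_val : i < step k b /\ bwd = i + (n - step k b) :> nat \/
               step k b <= i /\ bwd = i - step k b :> nat.
  rewrite /bwd /=; case: (addn_modn_cases lt_in (leq_subr (step k b) n)) => -[? ->]; lia.
clearbody fwd bwd.
(* Near the wrap-around point the lift with small absolute value is the nearer one. *)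
have [[near no_wrap]|[far no_wrap]] :
    (F b i <= F b (n - i) /\ i + step k b < n) \/ (F b (n - i) <= F b i /\ step k b <= i).
  by have := @F_near_far b i (n - i); have := @F_near_far b (n - i) i; lia.
- rewrite /qdist (minn_idPl near) => qw_gt0.
  have [spoke|[fw|[[le_si bw]|[lt_is bw]]]] := F_descent qw_gt0.
  + by exists (~~ b, i) => //; apply: (qdist_lt (x := i)) => /=; lia.
  + by exists (b, fwd) => //; apply: (qdist_lt (x := i + step k b)) => /=; lia.
  + by exists (b, bwd) => //; apply: (qdist_lt (x := i - step k b)) => /=; lia.
  + by exists (b, bwd) => //; apply: (qdist_lt (x := step k b - i)) => /=; lia.
- rewrite /qdist (minn_idPr far) => qw_gt0.
  have [spoke|[fw|[[le_sx bw]|[lt_xs bw]]]] := F_descent qw_gt0.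
  + by exists (~~ b, i) => //; apply: (qdist_lt (x := n - i)) => /=; lia.
  + by exists (b, bwd) => //; apply: (qdist_lt (x := n - i + step k b)) => /=; lia.
  + by exists (b, fwd) => //; apply: (qdist_lt (x := n - i - step k b)) => /=; lia.
  + by exists (b, fwd) => //; apply: (qdist_lt (x := step k b - (n - i))) => /=; lia.
Qed.

Lemma qpot_base : qpot (b0, o) = 0.
Proof. by rewrite /qpot /qdist /= o_eq0 F_base min0n. Qed.

Lemma qpot_eq0 w : qpot w = 0 -> w = (b0, o).
Proof.
case: w => b i; rewrite /qpot /qdist /= => /eqP; rewrite -leqn0 geq_min !leqn0.
case/orP=> /eqP /F_eq0 [-> i_eq0]; congr pair; apply: val_inj; rewrite /= o_eq0 //.
by have := ltn_ord i; lia.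
Qed.

Lemma qpot_lt_card w : qpot w < #|GPV n|.
Proof.
case: w => b i; rewrite card_prod card_bool card_ord.
by have := ltn_ord i; have := F_le b i; have := @qdist_le b i i; rewrite /qpot /=; lia.
Qed.

Lemma gdist_qpot w : gdist (gp_adj n k) w (b0, o) = qpot w.
Proof.
exact: gdist_potential qpot_lipschitz qpot_base qpot_eq0 qpot_descent qpot_lt_card w.
Qed.

End LadderQuotient.

(* [(hops j).+1] is the ladder distance between u_0 and v_j, and between v_0 and u_j:
   [j %/ 4] inner edges, one spoke and at most two rim edges. *)
Definition hops (j : nat) : nat := j %/ 4 + minn (j %% 4) 2.

Definition distU (b : bool) (j : nat) : nat :=
  if b then (hops j).+1 else minn j (hops j).+2.

Definition distV (b : bool) (j : nat) : nat :=
  if b then hops j + 2 * minn (j %% 4) 1 else (hops j).+1.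

Lemma distU_step b x :
  distU b x <= (distU b (x + step 4 b)).+1 /\ distU b (x + step 4 b) <= (distU b x).+1.
Proof. by case: b; rewrite /distU /hops /=; lia. Qed.

Lemma distV_step b x :
  distV b x <= (distV b (x + step 4 b)).+1 /\ distV b (x + step 4 b) <= (distV b x).+1.
Proof. by case: b; rewrite /distV /hops /=; lia. Qed.

Lemma distU_fold b x : x <= step 4 b -> distU b x <= (distU b (step 4 b - x)).+1.
Proof. by case: b; rewrite /distU /hops /=; lia. Qed.

Lemma distV_fold b x : x <= step 4 b -> distV b x <= (distV b (step 4 b - x)).+1.
Proof. by case: b; rewrite /distV /hops /=; lia. Qed.

Lemma distU_spoke b x : distU b x <= (distU (~~ b) x).+1.
Proof. by case: b; rewrite /distU /hops /=; lia. Qed.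

Lemma distV_spoke b x : distV b x <= (distV (~~ b) x).+1.
Proof. by case: b; rewrite /distV /hops /=; lia. Qed.

Lemma distU_near_far n : 24 <= n ->
  forall b x y, x <= 4 -> n <= y + 4 -> distU b x <= distU b y.
Proof. by move=> n_ge24 [] x y; rewrite /distU /hops; lia. Qed.

Lemma distV_near_far n : 24 <= n ->
  forall b x y, x <= 4 -> n <= y + 4 -> distV b x <= distV b y.
Proof. by move=> n_ge24 [] x y; rewrite /distV /hops; lia. Qed.

Lemma distU_eq0 b x : distU b x = 0 -> b = false /\ x = 0.
Proof. by case: b; rewrite /distU /hops; lia. Qed.

Lemma distV_eq0 b x : distV b x = 0 -> b = true /\ x = 0.
Proof. by case: b; rewrite /distV /hops; lia. Qed.

Lemma distU_le b x : distU b x <= x.+2.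
Proof. by case: b; rewrite /distU /hops; lia. Qed.

Lemma distV_le b x : distV b x <= x.+2.
Proof. by case: b; rewrite /distV /hops; lia. Qed.

Lemma distU_descent b x : 0 < distU b x ->
  distU (~~ b) x = (distU b x).-1 \/ distU b (x + step 4 b) = (distU b x).-1 \/
  (step 4 b <= x /\ distU b (x - step 4 b) = (distU b x).-1) \/
  (x < step 4 b /\ distU b (step 4 b - x) = (distU b x).-1).
Proof.
rewrite /distU /hops; case: b => /= pos.
- have [le_x2|[eq_x3|le4x]] : x <= 2 \/ x = 3 \/ 4 <= x by lia.
  + by left; lia.
  + by do 3 right; lia.
  + by do 2 right; left; lia.
- by have [le4x|lt_x4] := leqP 4 x; [left | do 2 right; left]; lia.
Qed.

Lemma distV_descent b x : 0 < distV b x ->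
  distV (~~ b) x = (distV b x).-1 \/ distV b (x + step 4 b) = (distV b x).-1 \/
  (step 4 b <= x /\ distV b (x - step 4 b) = (distV b x).-1) \/
  (x < step 4 b /\ distV b (step 4 b - x) = (distV b x).-1).
Proof.
rewrite /distV /hops; case: b => /= pos.
- by have [r0|r_pos] := eqVneq (x %% 4) 0; [do 2 right; left | left]; lia.
- have [r0|[r12|r3]] : x %% 4 = 0 \/ 0 < x %% 4 < 3 \/ x %% 4 = 3 by lia.
  + by left; lia.
  + by do 2 right; left; lia.
  + by right; left; lia.
Qed.

Lemma distV_true_ge4 m : 13 <= m -> 4 <= distV true m.
Proof. by rewrite /distV /hops; lia. Qed.

Section BaseDistances.
Variables (n : nat) (o : 'I_n).
Hypotheses (n_ge24 : 24 <= n) (o_eq0 : val o = 0).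

Let k_lt_half : 2 * 4 < n. Proof. lia. Qed.

Lemma gdist_u0 w : gdist (gp_adj n 4) w (false, o) = qdist n distU w.1 w.2.
Proof.
exact: (@gdist_qpot n 4 distU false o isT k_lt_half o_eq0 distU_step distU_fold
          distU_spoke (distU_near_far n_ge24) distU_eq0 erefl distU_le distU_descent).
Qed.

Lemma gdist_v0 w : gdist (gp_adj n 4) w (true, o) = qdist n distV w.1 w.2.
Proof.
exact: (@gdist_qpot n 4 distV true o isT k_lt_half o_eq0 distV_step distV_fold
          distV_spoke (distV_near_far n_ge24) distV_eq0 erefl distV_le distV_descent).
Qed.

End BaseDistances.

Definition nearer (d d' : bool -> nat -> nat) (i : nat) : nat :=
  (d false i < d' false i) + (d true i < d' true i).

Lemma card_nearer n (d d' : bool -> nat -> nat) :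
  #|[set w : GPV n | d w.1 w.2 < d' w.1 w.2]| = \sum_(i < n) nearer d d' i.
Proof.
rewrite -sum1_card big_mkcond /= (eq_bigr (fun w : GPV n => d w.1 w.2 < d' w.1 w.2 : nat)).
  rewrite -(pair_big xpredT xpredT (fun b (i : 'I_n) => d b i < d' b i : nat)) /=.
  by rewrite big_bool /= -big_split /=; apply: eq_bigr => i _; rewrite addnC.
by move=> w _; rewrite inE; case: ltnP.
Qed.

Section Counting.
Variable n : nat.
Hypothesis n_gt24 : 24 < n.

Local Notation dU := (qdist n distU).
Local Notation dV := (qdist n distV).

Definition pm_count (k i : nat) : nat := (i == k) + (i == n - k).

(* Index i never has more vertices nearer to u_0 than to v_0, except at i = ±1, ±2 (two more)
   and i = ±3 (one more); at i = ±4, ±8, ±12 it has two more nearer to v_0.  These twelve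
   indices are distinct because n > 24. *)
Definition surplus (i : nat) : nat := 2 * (pm_count 4 i + pm_count 8 i + pm_count 12 i).

Definition deficit (i : nat) : nat := 2 * (pm_count 1 i + pm_count 2 i) + pm_count 3 i.

Lemma pm_count_sym k t : k <= n -> t <= n -> pm_count k (n - t) = pm_count k t.
Proof.
move=> le_kn le_tn; rewrite /pm_count addnC.
by congr (_ + _); apply/eqP/eqP; lia.
Qed.

Lemma sum_pm_count k : 0 < k -> 2 * k < n -> \sum_(i < n) pm_count k i = 2.
Proof.
move=> k_gt0 lt_2kn; rewrite big_split /=.
have sum_eq1 m : m < n -> \sum_(i < n) (i == m :> nat) = 1.
  move=> lt_mn; rewrite (bigD1 (Ordinal lt_mn)) //= eqxx big1 // => i ne_i.
  by case: eqP => // eq_im; move: ne_i; rewrite -(inj_eq val_inj) /= eq_im eqxx.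
by rewrite !sum_eq1 //; lia.
Qed.

Lemma sum_surplus : \sum_(i < n) surplus i = 12.
Proof. by rewrite -big_distrr big_split big_split /= !sum_pm_count; lia. Qed.

Lemma sum_deficit : \sum_(i < n) deficit i = 10.
Proof. by rewrite big_split -big_distrr big_split /= !sum_pm_count; lia. Qed.

Lemma nearer_bound_low i : i <= 12 ->
  nearer dU dV i + surplus i <= nearer dV dU i + deficit i.
Proof.
move=> le_i12; have far k : 0 < k <= 12 -> (i == n - k) = false by move=> ?; apply/eqP; lia.
rewrite /nearer /surplus /deficit /pm_count !far //.
have -> : dU false i = distU false i by apply/minn_idPl; rewrite /distU /hops; lia.
have -> : dU true i = distU true i by apply/minn_idPl; rewrite /distU /hops; lia.
have -> : dV false i = distV false i by apply/minn_idPl; rewrite /distV /hops; lia.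
(* The far lift may be the nearer one here: for n = 25, v_9 is at distance 4 from v_0
   through v_16. *)
have : dV true i <= distV true i /\ (dV true i = distV true i \/ 4 <= dV true i).
  by have := @distV_true_ge4 (n - i); rewrite /qdist; lia.
move: (dV true i) => y.
by case: i le_i12 {far} => [|[|[|[|[|[|[|[|[|[|[|[|[|i]]]]]]]]]]]]] //= _; lia.
Qed.

Lemma nearer_bound_mid i : 12 < i -> 12 < n - i -> nearer dU dV i <= nearer dV dU i.
Proof.
move=> lt12i lt12ni; rewrite /nearer.
have -> : dV false i = dU true i by [].
have -> : dU false i = (dU true i).+1 by rewrite /qdist /distU /hops; lia.
lia.
Qed.

Lemma nearer_bound i : i < n ->
  nearer dU dV i + surplus i <= nearer dV dU i + deficit i.
Proof.
move=> lt_in; have [le_i12|lt12i] := leqP i 12; first exact: nearer_bound_low.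
have [le_ni12|lt12ni] := leqP (n - i) 12.
  have := nearer_bound_low le_ni12.
  by rewrite /nearer /surplus /deficit !qdist_sym ?pm_count_sym //; lia.
have pm_count0 k : 0 < k <= 12 -> pm_count k i = 0 by rewrite /pm_count; lia.
rewrite /surplus /deficit !pm_count0 //.
by have := nearer_bound_mid lt12i lt12ni; lia.
Qed.

Lemma sum_nearer_lt : \sum_(i < n) nearer dU dV i < \sum_(i < n) nearer dV dU i.
Proof.
have : \sum_(i < n) (nearer dU dV i + surplus i) <= \sum_(i < n) (nearer dV dU i + deficit i).
  by apply: leq_sum => i _; exact: nearer_bound.
by rewrite big_split [X in _ <= X]big_split /= sum_surplus sum_deficit; lia.
Qed.

End Counting.

Theorem proposition3p1 (n : nat) : 24 < n -> ~ dist_balanced (gp_adj n 4) 1.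
Proof.
move=> n_gt24 balanced; have n_ge24 : 24 <= n := ltnW n_gt24.
pose o : 'I_n := Ordinal (leq_ltn_trans (leq0n 24) n_gt24).
have o_eq0 : val o = 0 by [].
have u0v0 : gdist (gp_adj n 4) (false, o) (true, o) = 1.
  by rewrite (gdist_v0 n_ge24 o_eq0) /qdist /distV /hops /=; lia.
have := balanced _ _ u0v0; rewrite /Wset.
under eq_finset => w do rewrite (gdist_u0 n_ge24 o_eq0) (gdist_v0 n_ge24 o_eq0).
under [in X in _ = X -> _]eq_finset => w do
  rewrite (gdist_u0 n_ge24 o_eq0) (gdist_v0 n_ge24 o_eq0).
rewrite !card_nearer.
by have := sum_nearer_lt n_gt24; lia.
Qed.
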